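(* Fix $\omega$, let $v$ be a blocked path, let $\hat v(i)=v(i-\delta)+2\delta v'(i-\delta)$ for $i\in\mathbb{Z}$ and $\Delta_d\hat v(i)=\hat v(i+1)-2\hat v(i)+\hat v(i-1)$. Let $\hat F=F\int_{\delta}^{1-\delta}\chi_A^\varepsilon(x)\,dx$. Then $F(1-2(\delta+\varepsilon))\le\hat F\le(1-2\delta)F$, and for every $i\in\mathbb{Z}$ $$-2\delta\big[v'(i-1+\delta)-v'(i-1-\delta)\big]\le\Delta_d\hat v(i)+\hat F\le(1+2\delta)\big[v'(i+\delta)-v'(i-\delta)\big].$$
   Context: Fix $0<\delta\ll1/2$, $F>0$ and $\varepsilon\in(0,\tfrac12-\delta)$. Let $\mathbb{Z}^*=\mathbb{Z}+\tfrac12$, $b_{i,j}=(i,j)$; $\phi\in C_c^\infty(\mathbb{R}^2)$ nonnegative with support in $[-\delta,\delta]^2$, $\phi_{i,j}(x,s)=\phi((x,s)-b_{i,j})$; $(l(i,j)(\omega))_{(i,j)\in\mathbb{Z}\times\mathbb{Z}^*}$ nonnegative (i.i.d. exponential) random variables. Let $A=\mathbb{R}\setminus\bigcup_{i\in\mathbb{Z}}(i-\delta,i+\delta)$, $A_\varepsilon=\mathbb{R}\setminus\bigcup_{i\in\mathbb{Z}}(i-\delta-\varepsilon,i+\delta+\varepsilon)$, and $\chi_A^\varepsilon$ a smooth $1$-periodic function with $\chi_{A_\varepsilon}\le\chi_A^\varepsilon\le\chi_A$. A blocked path is a function $v\in C^1_{loc}(\mathbb{R})$ such that for every $i\in\mathbb{Z}$: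 $v''(x)=-F\chi_A^\varepsilon(x)$ on $(i+\delta,i+1-\delta)$ and $v''(x)=\sum_{j\in\mathbb{Z}^*}l(i,j)(\omega)\phi_{i,j}(x,v(x))$ on $(i-\delta,i+\delta)$. *)

From Stdlib Require Import Reals Lra ZArith List ClassicalDescription.
From Coquelicot Require Import Coquelicot.
Open Scope R_scope.
Import ListNotations.

Definition inA (delta x : R) : Prop := forall i : Z, Rabs (x - IZR i) >= delta.
Definition inAeps (delta eps x : R) : Prop :=
  forall i : Z, Rabs (x - IZR i) >= delta + eps.

Definition indic (P : R -> Prop) (x : R) : R :=
  if excluded_middle_informative (P x) then 1 else 0.

Definition smooth1 (f : R -> R) : Prop := forall (n : nat) (x : R), ex_derive_n f n x.

(* C^infty on R^2: a family of all iterated partial derivatives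
   (indexed by words over {d/dx = false, d/ds = true}), all continuous. *)
Definition smooth2 (f : R -> R -> R) : Prop :=
  exists D : list bool -> R -> R -> R,
    D nil = f /\
    forall (w : list bool) (x s : R),
      is_derive (fun y => D w y s) x (D (false :: w) x s) /\
      is_derive (fun t => D w x t) s (D (true :: w) x s) /\
      continuity_2d_pt (D w) x s.

Definition Zsum (a : Z -> R) : R :=
  Series (fun n => a (Z.of_nat n)) + Series (fun n => a (- Z.of_nat (S n))%Z).

(* phi_{i,j}(x,s) = phi((x,s) - (i,j)), with j = k + 1/2 in Z* *)
Definition phi_ij (phi : R -> R -> R) (i k : Z) (x s : R) : R :=
  phi (x - IZR i) (s - (IZR k + /2)).

(* Blocked path.  l i k stands for l(i, k + 1/2) (fixed omega). *)
Definition blocked_path (delta F : R) (chi : R -> R) (phi : R -> R -> R)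
  (l : Z -> Z -> R) (v : R -> R) : Prop :=
  (forall x, ex_derive v x /\ continuous (Derive v) x) /\
  forall i : Z,
    (forall x, IZR i + delta < x < IZR i + 1 - delta ->
       is_derive (Derive v) x (- F * chi x)) /\
    (forall x, IZR i - delta < x < IZR i + delta ->
       is_derive (Derive v) x (Zsum (fun k => l i k * phi_ij phi i k x (v x)))).

Definition vhat (delta : R) (v : R -> R) (i : Z) : R :=
  v (IZR i - delta) + 2 * delta * Derive v (IZR i - delta).

Definition disc_lap (f : Z -> R) (i : Z) : R :=
  f (i + 1)%Z - 2 * f i + f (i - 1)%Z.

From Stdlib Require Import Reals ZArith Lra Lia ClassicalDescription.
From Coquelicot Require Import Coquelicot.
Open Scope R_scope.

(* On each site [j - delta, j + delta] the path is convex (v'' is a nonnegative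
   sum of bumps), so v(j + delta) - v(j - delta) lies between 2 delta v'(j - delta)
   and 2 delta v'(j + delta).  On each gap v'' = - F chi with chi 1-periodic, so v'
   drops by exactly Fhat across a gap, and v(t + 1) - v(t) is affine on the gap
   (i - 1 + delta, i - delta) with slope v'(i + delta) - v'(i - 1 + delta).  Adding
   these identities and inequalities for the sites i and i - 1 gives both bounds on
   the discrete Laplacian of vhat. *)

Lemma Series_ge0 (a : nat -> R) : (forall n, 0 <= a n) -> 0 <= Series a.
Proof.
  intros Ha. unfold Series.
  assert (Hle : Rbar_le (Lim_seq (fun _ => 0)) (Lim_seq (sum_n a))).
  { apply Lim_seq_le_loc, filter_forall. intros n.
    induction n as [|n IH]; [rewrite sum_O; apply Ha|].
    rewrite sum_Sn. specialize (Ha (S n)). unfold plus; simpl. lra. }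
  rewrite Lim_seq_const in Hle.
  destruct (Lim_seq (sum_n a)); simpl in *; lra.
Qed.

Lemma Zsum_ge0 (a : Z -> R) : (forall k, 0 <= a k) -> 0 <= Zsum a.
Proof. intros Ha. apply Rplus_le_le_0_compat; apply Series_ge0; auto. Qed.

Lemma periodic_IZR (f : R -> R) : (forall x, f (x + 1) = f x) ->
  forall k x, f (x + IZR k) = f x.
Proof.
  intros Hper.
  assert (Hnat : forall n x, f (x + INR n) = f x).
  { induction n as [|n IH]; intros x; [simpl; f_equal; lra|].
    rewrite S_INR, <- Rplus_assoc, Hper. apply IH. }
  intros k x. destruct (Z_le_gt_dec 0 k).
  - rewrite <- (Z2Nat.id k), <- INR_IZR_INZ by lia. apply Hnat.
  - replace k with (- Z.of_nat (Z.to_nat (- k)))%Z by lia.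
    rewrite opp_IZR, <- INR_IZR_INZ.
    rewrite <- (Hnat (Z.to_nat (- k)) (x + - INR (Z.to_nat (- k)))).
    f_equal; ring.
Qed.

Lemma RInt_periodic_shift (f : R -> R) (k : Z) (a b : R) :
  (forall x, f (x + 1) = f x) -> (forall x, continuous f x) ->
  RInt f (a + IZR k) (b + IZR k) = RInt f a b.
Proof.
  intros Hper Hc.
  pose proof (RInt_comp_lin (V := R_CompleteNormedModule) f 1 (IZR k) a b) as E.
  rewrite !Rmult_1_l in E. rewrite <- E.
  - apply RInt_ext. intros x _.
    change (scal 1 (f (1 * x + IZR k))) with (1 * f (1 * x + IZR k)).
    rewrite !Rmult_1_l. apply periodic_IZR, Hper.
  - apply (ex_RInt_continuous (V := R_CompleteNormedModule)). intros; apply Hc.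
Qed.

Lemma continuous_shift (f : R -> R) (c t : R) :
  continuous f (t + c) -> continuous (fun s => f (s + c)) t.
Proof.
  intros H. apply (continuous_comp (fun s => s + c) f); [|exact H].
  apply (ex_derive_continuous (fun s : R => s + c)). auto_derive; auto.
Qed.

Lemma is_derive_shift (f : R -> R) (c t l : R) :
  is_derive f (t + c) l -> is_derive (fun s => f (s + c)) t l.
Proof.
  intros H.
  assert (Hs : is_derive (fun s : R => s + c) t 1) by (auto_derive; auto; ring).
  pose proof (is_derive_comp f (fun s => s + c) t l 1 H Hs) as K.
  change (scal 1 l) with (1 * l) in K. rewrite Rmult_1_l in K. exact K.
Qed.

Lemma MVT_closed (f f' : R -> R) (a b : R) : a <= b ->
  (forall t, a < t < b -> is_derive f t (f' t)) ->
  (forall t, a <= t <= b -> continuous f t) ->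
  exists c, a <= c <= b /\ f b - f a = f' c * (b - a).
Proof.
  intros Hab Hf' Hfc. destruct (MVT_gen f a b f') as [c [Hc E]].
  - intros t Ht. rewrite Rmin_left, Rmax_right in Ht by lra. apply Hf'. lra.
  - intros t Ht. rewrite Rmin_left, Rmax_right in Ht by lra.
    apply continuity_pt_filterlim, Hfc. lra.
  - rewrite Rmin_left, Rmax_right in Hc by lra. eauto.
Qed.

Section RealCalculus.

Variables (f f' : R -> R) (a b : R).
Hypothesis Hab : a <= b.
Hypothesis Hf' : forall t, a < t < b -> is_derive f t (f' t).
Hypothesis Hfc : forall t, a <= t <= b -> continuous f t.

Lemma nondecreasing_of_derive_ge0 : (forall t, a <= t <= b -> 0 <= f' t) ->
  forall x y, a <= x -> x <= y -> y <= b -> f x <= f y.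
Proof.
  intros Hpos x y Hx Hxy Hy.
  destruct (MVT_closed f f' x y Hxy) as [c [Hc E]].
  - intros t Ht. apply Hf'. lra.
  - intros t Ht. apply Hfc. lra.
  - assert (0 <= f' c * (y - x)) by (apply Rmult_le_pos; [apply Hpos|]; lra). lra.
Qed.

Lemma increment_between_derive_bounds :
  (forall t, a <= t <= b -> f' a <= f' t <= f' b) ->
  (b - a) * f' a <= f b - f a <= (b - a) * f' b.
Proof.
  intros Hmono. destruct (MVT_closed f f' a b Hab Hf' Hfc) as [c [Hc ->]].
  specialize (Hmono c Hc). split; nra.
Qed.

Lemma RInt_derive_open : (forall t, continuous f' t) -> RInt f' a b = f b - f a.
Proof.
  intros Hc'.
  assert (Hprim : forall x, is_derive (RInt f' a) x (f' x)).
  { intros x. apply (is_derive_RInt f' _ a); [|apply Hc'].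
    apply filter_forall. intros y. apply (RInt_correct (V := R_CompleteNormedModule)).
    apply (ex_RInt_continuous (V := R_CompleteNormedModule)). intros; apply Hc'. }
  set (g := fun x => f x - RInt f' a x).
  destruct (MVT_closed g (fun _ => 0) a b Hab) as [c [_ E]].
  - intros t Ht. unfold g. replace 0 with (f' t - f' t) by ring.
    apply (is_derive_minus f); [apply Hf'; lra | apply Hprim].
  - intros t Ht. unfold g. apply (continuous_minus f); [apply Hfc; lra|].
    apply (ex_derive_continuous (RInt f' a)). eexists. apply Hprim.
  - unfold g in E. rewrite RInt_point in E. change (zero : R) with 0 in E. lra.
Qed.

End RealCalculus.

Lemma RInt_le_const (f : R -> R) (a b m : R) : a <= b -> ex_RInt f a b ->
  (forall x, a < x < b -> f x <= m) -> RInt f a b <= (b - a) * m.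
Proof.
  intros Hab Hex Hle. replace ((b - a) * m) with (RInt (fun _ => m) a b).
  - apply RInt_le; auto. apply ex_RInt_const.
  - rewrite RInt_const. reflexivity.
Qed.

Lemma const_le_RInt (f : R -> R) (a b m : R) : a <= b -> ex_RInt f a b ->
  (forall x, a < x < b -> m <= f x) -> (b - a) * m <= RInt f a b.
Proof.
  intros Hab Hex Hle. replace ((b - a) * m) with (RInt (fun _ => m) a b).
  - apply RInt_le; auto. apply ex_RInt_const.
  - rewrite RInt_const. reflexivity.
Qed.

Lemma inAeps_mid_cell (delta eps x : R) : 0 <= delta + eps ->
  delta + eps <= x <= 1 - delta - eps -> inAeps delta eps x.
Proof.
  intros Hpos Hx k. destruct (Z_le_gt_dec k 0) as [Hk|Hk].
  - apply IZR_le in Hk. unfold Rabs; destruct (Rcase_abs _); lra.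
  - assert (1 <= IZR k) by (apply IZR_le; lia).
    unfold Rabs; destruct (Rcase_abs _); lra.
Qed.

Lemma RInt_cell_le (delta : R) (chi : R -> R) : delta <= /2 ->
  (forall x, continuous chi x) -> (forall x, chi x <= indic (inA delta) x) ->
  RInt chi delta (1 - delta) <= 1 - 2 * delta.
Proof.
  intros Hdelta Hc Hup.
  replace (1 - 2 * delta) with ((1 - delta - delta) * 1) by ring.
  apply RInt_le_const; [lra | apply (ex_RInt_continuous (V := R_CompleteNormedModule)); auto |].
  intros x _. specialize (Hup x). unfold indic in Hup.
  destruct (excluded_middle_informative _); lra.
Qed.

Lemma RInt_cell_ge (delta eps : R) (chi : R -> R) : 0 < delta -> 0 < eps < /2 - delta ->
  (forall x, continuous chi x) -> (forall x, indic (inAeps delta eps) x <= chi x) ->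
  1 - 2 * (delta + eps) <= RInt chi delta (1 - delta).
Proof.
  intros Hdelta Heps Hc Hlow.
  assert (Hex : forall a b, ex_RInt chi a b).
  { intros a b. apply (ex_RInt_continuous (V := R_CompleteNormedModule)); auto. }
  assert (Hge0 : forall x, 0 <= chi x).
  { intros x. specialize (Hlow x). unfold indic in Hlow.
    destruct (excluded_middle_informative _); lra. }
  rewrite <- (RInt_Chasles chi delta (delta + eps) (1 - delta)) by apply Hex.
  rewrite <- (RInt_Chasles chi (delta + eps) (1 - delta - eps) (1 - delta)) by apply Hex.
  change plus with Rplus.
  assert (0 <= RInt chi delta (delta + eps)) by (apply RInt_ge_0; auto; lra).
  assert (0 <= RInt chi (1 - delta - eps) (1 - delta)) by (apply RInt_ge_0; auto; lra).
  assert ((1 - delta - eps - (delta + eps)) * 1 <= RInt chi (delta + eps) (1 - delta - eps)).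
  { apply const_le_RInt; [lra | apply Hex |].
    intros x Hx. specialize (Hlow x). unfold indic in Hlow.
    destruct (excluded_middle_informative _) as [_|Hn]; [lra|].
    exfalso. apply Hn, inAeps_mid_cell; lra. }
  lra.
Qed.

Section BlockedPath.

Variables (delta F : R) (chi : R -> R) (phi : R -> R -> R) (l : Z -> Z -> R) (v : R -> R).
Hypothesis Hdelta : 0 < delta < /2.
Hypothesis Hphi_nonneg : forall x s, 0 <= phi x s.
Hypothesis Hl : forall i k, 0 <= l i k.
Hypothesis Hchi_cont : forall x, continuous chi x.
Hypothesis Hchi_per : forall x, chi (x + 1) = chi x.
Hypothesis Hv : blocked_path delta F chi phi l v.

Let Hv_derive : forall x, is_derive v x (Derive v x).
Proof. intros x. apply Derive_correct, (proj1 Hv). Qed.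

Let Hv_cont : forall x, continuous v x.
Proof. intros x. apply (ex_derive_continuous v), (proj1 Hv). Qed.

Let Hv'_cont : forall x, continuous (Derive v) x.
Proof. intros x. apply (proj1 Hv). Qed.

Let Hv''_gap : forall (i : Z) x, IZR i + delta < x < IZR i + 1 - delta ->
  is_derive (Derive v) x (- F * chi x).
Proof. intros i. apply (proj2 Hv i). Qed.

Lemma blocked_path_Derive_site_nondecreasing (j : Z) (x y : R) :
  IZR j - delta <= x -> x <= y -> y <= IZR j + delta -> Derive v x <= Derive v y.
Proof.
  apply (nondecreasing_of_derive_ge0 (Derive v)
    (fun t => Zsum (fun k => l j k * phi_ij phi j k t (v t))) (IZR j - delta) (IZR j + delta)).
  - intros t Ht. apply (proj2 Hv j). exact Ht.
  - intros t _. apply Hv'_cont.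
  - intros t _. apply Zsum_ge0. intros k. apply Rmult_le_pos; [apply Hl | apply Hphi_nonneg].
Qed.

Lemma blocked_path_site_increment (j : Z) :
  2 * delta * Derive v (IZR j - delta) <= v (IZR j + delta) - v (IZR j - delta)
    <= 2 * delta * Derive v (IZR j + delta).
Proof.
  replace (2 * delta) with (IZR j + delta - (IZR j - delta)) by ring.
  apply increment_between_derive_bounds; [lra | intros; apply Hv_derive | intros; apply Hv_cont |].
  intros t Ht. split; apply (blocked_path_Derive_site_nondecreasing j); lra.
Qed.

Lemma blocked_path_gap_drop (j : Z) :
  Derive v (IZR j + 1 - delta) = Derive v (IZR j + delta) - F * RInt chi delta (1 - delta).
Proof.
  assert (Hex : ex_RInt chi (IZR j + delta) (IZR j + 1 - delta)).
  { apply (ex_RInt_continuous (V := R_CompleteNormedModule)). intros; auto. }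
  rewrite <- (RInt_periodic_shift chi j) by assumption.
  replace (delta + IZR j) with (IZR j + delta) by ring.
  replace (1 - delta + IZR j) with (IZR j + 1 - delta) by ring.
  assert (E : RInt (fun x => scal (- F) (chi x)) (IZR j + delta) (IZR j + 1 - delta)
              = Derive v (IZR j + 1 - delta) - Derive v (IZR j + delta)).
  { apply RInt_derive_open; [lra | | |].
    - intros t Ht. apply (Hv''_gap j). exact Ht.
    - intros t _. apply Hv'_cont.
    - intros t. apply (continuous_scal_r (- F) chi), Hchi_cont. }
  rewrite (RInt_scal (V := R_CompleteNormedModule)) in E by exact Hex.
  change (scal (- F) (RInt chi (IZR j + delta) (IZR j + 1 - delta)))
    with (- F * RInt chi (IZR j + delta) (IZR j + 1 - delta)) in E.
  lra.
Qed.

(* On the gap (i - 1 + delta, i - delta), both t and t + 1 lie in gaps, where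
   v'' = - F chi takes the same value by periodicity. *)
Lemma blocked_path_unit_difference (i : Z) :
  v (IZR i + 1 - delta) - v (IZR i + delta) - v (IZR i - delta) + v (IZR i - 1 + delta)
    = (1 - 2 * delta) * (Derive v (IZR i + delta) - Derive v (IZR i - 1 + delta)).
Proof.
  set (a := IZR i - 1 + delta). set (b := IZR i - delta).
  set (q := fun t => Derive v (t + 1) - Derive v t).
  assert (Hq : forall t, a <= t <= b -> q t = q a).
  { intros t Ht.
    assert (E : RInt (fun _ => 0) a t = q t - q a).
    { apply (RInt_derive_open q); [lra | | |].
      - intros s Hs. unfold q.
        replace 0 with (- F * chi (s + 1) - - F * chi s) by (rewrite Hchi_per; ring).
        apply (is_derive_minus (fun s => Derive v (s + 1))).
        + apply is_derive_shift, (Hv''_gap i). unfold a, b in *; lra.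
        + apply (Hv''_gap (i - 1)). rewrite minus_IZR. unfold a, b in *; lra.
      - intros s _. apply (continuous_minus (fun s => Derive v (s + 1))).
        + apply continuous_shift, Hv'_cont.
        + apply Hv'_cont.
      - intros s. apply continuous_const. }
    rewrite RInt_const in E. change (scal (t - a) 0) with ((t - a) * 0) in E. lra. }
  assert (E : RInt (fun _ => q a) a b = (v (b + 1) - v b) - (v (a + 1) - v a)).
  { apply (RInt_derive_open (fun t => v (t + 1) - v t)); [unfold a, b; lra | | |].
    - intros t Ht. rewrite <- (Hq t) by lra. unfold q.
      apply (is_derive_minus (fun s => v (s + 1))); [apply is_derive_shift|]; apply Hv_derive.
    - intros t _. apply (continuous_minus (fun s => v (s + 1)));
        [apply continuous_shift|]; apply Hv_cont.
    - intros t. apply continuous_const. }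
  rewrite RInt_const in E. change (scal (b - a) (q a)) with ((b - a) * q a) in E.
  unfold q, a, b in E |- *.
  replace (IZR i - 1 + delta + 1) with (IZR i + delta) in E by ring.
  replace (IZR i - delta + 1) with (IZR i + 1 - delta) in E by ring.
  nra.
Qed.

End BlockedPath.

Theorem mainTheorem5
  (delta F eps : R)
  (Hdelta : 0 < delta < /2) (HF : 0 < F) (Heps : 0 < eps < /2 - delta)
  (phi : R -> R -> R)
  (Hphi_smooth : smooth2 phi)
  (Hphi_nonneg : forall x s, 0 <= phi x s)
  (Hphi_supp : forall x s, delta < Rabs x \/ delta < Rabs s -> phi x s = 0)
  (l : Z -> Z -> R) (Hl : forall i k, 0 <= l i k)
  (chi : R -> R)
  (Hchi_smooth : smooth1 chi)
  (Hchi_per : forall x, chi (x + 1) = chi x)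
  (Hchi_low : forall x, indic (inAeps delta eps) x <= chi x)
  (Hchi_up : forall x, chi x <= indic (inA delta) x)
  (v : R -> R)
  (Hv : blocked_path delta F chi phi l v) :
  let Fhat := F * RInt chi delta (1 - delta) in
  F * (1 - 2 * (delta + eps)) <= Fhat <= (1 - 2 * delta) * F /\
  forall i : Z,
    - 2 * delta * (Derive v (IZR i - 1 + delta) - Derive v (IZR i - 1 - delta))
      <= disc_lap (vhat delta v) i + Fhat
      <= (1 + 2 * delta) * (Derive v (IZR i + delta) - Derive v (IZR i - delta)).
Proof.
  intros Fhat.
  assert (Hchi_cont : forall x, continuous chi x).
  { intros x. apply (ex_derive_continuous chi), (Hchi_smooth 1%nat x). }
  pose proof (RInt_cell_le delta chi ltac:(lra) Hchi_cont Hchi_up) as Hup.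
  pose proof (RInt_cell_ge _ _ _ (proj1 Hdelta) Heps Hchi_cont Hchi_low) as Hlow.
  split; [unfold Fhat; split; nra|].
  intros i. unfold disc_lap, vhat. rewrite plus_IZR, minus_IZR.
  pose proof (blocked_path_gap_drop _ _ _ _ _ _ Hdelta Hchi_cont Hchi_per Hv i) as G1.
  pose proof (blocked_path_gap_drop _ _ _ _ _ _ Hdelta Hchi_cont Hchi_per Hv (i - 1)) as G2.
  rewrite minus_IZR in G2.
  replace (IZR i - 1 + 1 - delta) with (IZR i - delta) in G2 by ring.
  pose proof (blocked_path_unit_difference _ _ _ _ _ _ Hdelta Hchi_per Hv i) as U.
  pose proof (blocked_path_site_increment _ _ _ _ _ _ Hdelta Hphi_nonneg Hl Hv i) as S1.
  pose proof (blocked_path_site_increment _ _ _ _ _ _ Hdelta Hphi_nonneg Hl Hv (i - 1)) as S2.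
  rewrite minus_IZR in S2.
  assert (M1 : Derive v (IZR i - delta) <= Derive v (IZR i + delta)).
  { apply (blocked_path_Derive_site_nondecreasing _ _ _ _ _ _ Hphi_nonneg Hl Hv i); lra. }
  assert (M2 : Derive v (IZR i - 1 - delta) <= Derive v (IZR i - 1 + delta)).
  { apply (blocked_path_Derive_site_nondecreasing _ _ _ _ _ _ Hphi_nonneg Hl Hv (i - 1));
      rewrite ?minus_IZR; lra. }
  unfold Fhat in *. split; nra.
Qed.
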